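(* Let $\mathcal U$ be a finite set and $R$ an $n(R)$-place relation on $\mathcal U$. Then $\lambda_1(R)\le\lambda'_0(R)+1$, and if equality holds then $\lambda_1(R)\le 2^{2^{n(R)^2}}$.
   Context: For $a\in\mathcal U$ and $A\subseteq\mathcal U$, $\mathrm{tp}_{\mathrm{bs}}(a,A,R)$ is the set of formulas $\varphi(x,\bar a)$ with $\bar a$ a tuple from $A$ and $\varphi(x,\bar y)$ an atomic or negated atomic formula in the vocabulary $\{R,=\}$ such that $(\mathcal U,R)\models\varphi(a,\bar a)$. $\lambda_1(R)=\max_{A\subseteq\mathcal U}|\{\mathrm{tp}_{\mathrm{bs}}(a,A,R):a\in\mathcal U\setminus A\}|$. For $A\subseteq\mathcal U$ and $n(R)$-tuples $\bar b,\bar c$, $\bar b\approx_A\bar c$ means: $b_i\in A\iff c_i\in A$; $b_i\in A\Rightarrow b_i=c_i$; and $b_i=b_j\iff c_i=c_j$. $\lambda'_0(R)$ is the least $|A|$ over $A\subseteq\mathcal U$ such that $\bar b\approx_A\bar c$ implies ($R(\bar b)\iff R(\bar c)$) for all $n(R)$-tuples $\bar b,\bar c$ from $\mathcal U$. *)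

From mathcomp Require Import all_boot.
Set Implicit Arguments. Unset Strict Implicit. Unset Printing Implicit Defensive.

Section Types.
Variables (U : finType) (n : nat).

(* Terms in one free variable x with parameters from U:
   None = the variable x, Some c = the parameter c. *)
Definition term := option U.
(* Atomic formulas in the vocabulary {R, =}: t1 = t2, or R(t_1,...,t_n). *)
Definition atom := ((term * term) + n.-tuple term)%type.
(* Literal: atomic formula (true) or negated atomic formula (false). *)
Definition literal := (atom * bool)%type.

Definition eval_term (a : U) (t : term) : U :=
  match t with None => a | Some c => c end.

Definition atom_holds (R : n.-tuple U -> bool) (a : U) (f : atom) : bool :=
  match f with
  | inl (t1, t2) => eval_term a t1 == eval_term a t2
  | inr ts => R (map_tuple (eval_term a) ts)
  end.

Definition lit_holds R a (l : literal) : bool := atom_holds R a l.1 == l.2.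

Definition term_in (A : {set U}) (t : term) : bool :=
  match t with None => true | Some c => c \in A end.

Definition atom_params_in (A : {set U}) (f : atom) : bool :=
  match f with
  | inl (t1, t2) => term_in A t1 && term_in A t2
  | inr ts => all (term_in A) ts
  end.

Definition tp_bs (a : U) (A : {set U}) (R : n.-tuple U -> bool) : {set literal} :=
  [set l : literal | atom_params_in A l.1 && lit_holds R a l].

Definition lambda1 (R : n.-tuple U -> bool) : nat :=
  \max_(A : {set U}) #|[set tp_bs a A R | a in ~: A]|.

Definition approx (A : {set U}) (b c : n.-tuple U) : bool :=
  [forall i : 'I_n,
     [&& ((tnth b i \in A) == (tnth c i \in A)),
         ((tnth b i \in A) ==> (tnth b i == tnth c i)) &
         [forall j : 'I_n, (tnth b i == tnth b j) == (tnth c i == tnth c j)]]].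

Definition good (R : n.-tuple U -> bool) (A : {set U}) : bool :=
  [forall b : n.-tuple U, forall c : n.-tuple U, approx A b c ==> (R b == R c)].

(* lambda'_0(R): least |A| with A good. The default #|U| is harmless since
   setT is always good and has size #|U|. *)
Definition lambda0' (R : n.-tuple U -> bool) : nat :=
  \big[minn/#|U|]_(A : {set U} | good R A) #|A|.

End Types.

From mathcomp Require Import all_boot.
Set Implicit Arguments. Unset Strict Implicit. Unset Printing Implicit Defensive.

(* Fix a good set B of minimal size. Each element of B \ A realises one type
   over A, while all elements outside A :|: B realise the same type, since
   goodness of B lets one exchange them inside R; hence lambda1 <= |B| + 1.
   Equality forces A and B to be disjoint.  Then, for a outside A, the truth
   of R at a tuple of terms over A depends only on the equality pattern of
   the tuple (which entries coincide, which are the variable), so the type of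
   a is determined by a boolean function on the at most 2^(n^2) patterns. *)

Section BasicTypes.
Variables (U : finType) (n : nat) (R : n.-tuple U -> bool).

Definition bs_types (A : {set U}) : {set {set literal U n}} :=
  [set tp_bs a A R | a in ~: A].

Lemma goodP (B : {set U}) (b c : n.-tuple U) :
  good R B -> approx B b c -> R b = R c.
Proof.
by move=> /forallP/(_ b)/forallP/(_ c)/implyP gB /gB/eqP.
Qed.

Lemma goodT : good R setT.
Proof.
apply/forallP => b; apply/forallP => c; apply/implyP => /forallP bc.
suff -> : b = c by [].
by apply: eq_from_tnth => i; have /and3P[_ /[!inE]/eqP -> _] := bc i.
Qed.

Lemma eval_term_eq_out (A : {set U}) a t1 t2 :
  a \notin A -> term_in A t1 -> term_in A t2 ->
  (eval_term a t1 == eval_term a t2) = (t1 == t2).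
Proof.
move=> aA; case: t1 => [c1|] /=; case: t2 => [c2|] //= c1A c2A; rewrite ?eqxx //.
- by apply/negbTE; apply: contra aA => /eqP <-.
- by apply/negbTE; apply: contra aA => /eqP ->.
Qed.

Lemma approx_eval_terms (A B : {set U}) a a' (ts ts' : n.-tuple (term U)) :
  a \notin A -> a' \notin A -> all (term_in A) ts -> all (term_in A) ts' ->
  (forall i, (eval_term a (tnth ts i) \in B) = (eval_term a' (tnth ts' i) \in B)) ->
  (forall i, eval_term a (tnth ts i) \in B ->
     eval_term a (tnth ts i) = eval_term a' (tnth ts' i)) ->
  (forall i j, (tnth ts i == tnth ts j) = (tnth ts' i == tnth ts' j)) ->
  approx B (map_tuple (eval_term a) ts) (map_tuple (eval_term a') ts').
Proof.
move=> aA a'A tsA ts'A memB eqB pat; apply/forallP => i.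
rewrite !tnth_map; apply/and3P; split; first by rewrite memB.
  by apply/implyP => /eqB ->.
apply/forallP => j; rewrite !tnth_map.
rewrite (eval_term_eq_out aA (all_tnthP tsA i) (all_tnthP tsA j)).
by rewrite (eval_term_eq_out a'A (all_tnthP ts'A i) (all_tnthP ts'A j)) pat.
Qed.

Lemma tp_bs_eq_out (A B : {set U}) a a' : good R B ->
  a \notin A -> a' \notin A -> a \notin B -> a' \notin B ->
  tp_bs a A R = tp_bs a' A R.
Proof.
move=> gB aA a'A aB a'B; apply/setP => -[f b]; rewrite !inE /=.
case fA: (atom_params_in A f) => //=; rewrite /lit_holds /=.
case: f fA => [[t1 t2]|ts] /= fA.
  by case/andP: fA => t1A t2A; rewrite !(eval_term_eq_out _ t1A t2A).
rewrite (goodP gB (approx_eval_terms aA a'A fA fA _ _ _)) // => i.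
  by case: (tnth ts i) => //=; rewrite (negbTE aB) (negbTE a'B).
by case: (tnth ts i) => //=; rewrite (negbTE aB).
Qed.

Lemma card_bs_types (A B : {set U}) : good R B ->
  #|bs_types A| <= #|B :\: A| + 1.
Proof.
move=> gB; rewrite /bs_types -(setID (~: A) B) imsetU.
apply: leq_trans (leq_card_setU _ _) _; apply: leq_add.
  by apply: leq_trans (leq_imset_card _ _) _; rewrite setDE setIC.
have [->|[a0 a0_out]] := set_0Vmem (~: A :\: B); first by rewrite imset0 cards0.
rewrite -(cards1 (tp_bs a0 A R)); apply: subset_leq_card.
apply/subsetP => _ /imsetP[a a_out ->]; rewrite inE; apply/eqP.
move: a_out a0_out; rewrite !inE => /andP[aB aA] /andP[a0B a0A].
exact: tp_bs_eq_out gB aA a0A aB a0B.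
Qed.

Lemma disjoint_of_card_bs_types (A B : {set U}) : good R B ->
  #|bs_types A| = #|B| + 1 -> A :&: B = set0.
Proof.
move=> gB cardAB; have := card_bs_types A gB.
rewrite cardAB leq_add2r => /(conj (subsetDl B A))/andP.
rewrite -eqEcard => /eqP BA; apply/setP => x; rewrite !inE.
by apply/negbTE/andP => -[xA]; rewrite -BA inE xA.
Qed.

(* The diagonal records which entries are the variable. *)
Definition term_pattern (ts : n.-tuple (term U)) : {ffun 'I_n * 'I_n -> bool} :=
  [ffun p => if p.1 == p.2 then tnth ts p.1 == None
             else tnth ts p.1 == tnth ts p.2].

Lemma term_pattern_eq (ts ts' : n.-tuple (term U)) i j :
  term_pattern ts = term_pattern ts' ->
  (tnth ts i == tnth ts j) = (tnth ts' i == tnth ts' j).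
Proof.
move=> /ffunP/(_ (i, j)); rewrite !ffunE /=.
by case: eqP => [->|_] //; rewrite !eqxx.
Qed.

Lemma term_pattern_var (ts ts' : n.-tuple (term U)) i :
  term_pattern ts = term_pattern ts' ->
  (tnth ts i == None) = (tnth ts' i == None).
Proof. by move=> /ffunP/(_ (i, i)); rewrite !ffunE /= eqxx. Qed.

Section DisjointGoodSet.
Variables (A B : {set U}).
Hypotheses (gB : good R B) (AB0 : A :&: B = set0).

Lemma eval_term_in_good a t : term_in A t ->
  (eval_term a t \in B) = (t == None) && (a \in B).
Proof.
case: t => [c|] //= cA; apply/negbTE/negP => cB.
by have := in_set0 c; rewrite -AB0 inE cA cB.
Qed.

Lemma R_eval_term_pattern a (ts ts' : n.-tuple (term U)) :
  a \notin A -> all (term_in A) ts -> all (term_in A) ts' ->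
  term_pattern ts = term_pattern ts' ->
  R (map_tuple (eval_term a) ts) = R (map_tuple (eval_term a) ts').
Proof.
move=> aA tsA ts'A pat; apply: (goodP gB); apply: (approx_eval_terms aA aA tsA ts'A).
- move=> i; rewrite !eval_term_in_good ?(all_tnthP tsA) ?(all_tnthP ts'A) //.
  by rewrite (term_pattern_var i pat).
- move=> i; rewrite eval_term_in_good ?(all_tnthP tsA) // => /andP[/eqP tsi _].
  by move: (term_pattern_var i pat); rewrite tsi eqxx => /esym/eqP ->.
- by move=> i j; apply: term_pattern_eq.
Qed.

Definition pattern_truth a : {ffun {ffun 'I_n * 'I_n -> bool} -> bool} :=
  [ffun p => [exists ts : n.-tuple (term U),
     [&& all (term_in A) ts, term_pattern ts == p & R (map_tuple (eval_term a) ts)]]].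

Definition atom_pattern_holds (f : {ffun {ffun 'I_n * 'I_n -> bool} -> bool})
    (x : atom U n) : bool :=
  match x with
  | inl (t1, t2) => t1 == t2
  | inr ts => f (term_pattern ts)
  end.

Definition pattern_literals f : {set literal U n} :=
  [set l : literal U n | atom_params_in A l.1 && (atom_pattern_holds f l.1 == l.2)].

Lemma tp_bs_pattern a : a \notin A -> tp_bs a A R = pattern_literals (pattern_truth a).
Proof.
move=> aA; apply/setP => -[f b]; rewrite !inE /=.
case fA: (atom_params_in A f) => //=; rewrite /lit_holds /=.
case: f fA => [[t1 t2]|ts] /= fA.
  by case/andP: fA => t1A t2A; rewrite (eval_term_eq_out _ t1A t2A).
rewrite ffunE; congr (_ == b); apply/idP/existsP.
  by move=> Rts; exists ts; rewrite fA eqxx Rts.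
by case=> ts' /and3P[ts'A /eqP pat Rts']; rewrite -(R_eval_term_pattern aA ts'A fA pat).
Qed.

Lemma card_bs_types_disjoint : #|bs_types A| <= 2 ^ (2 ^ (n ^ 2)).
Proof.
have -> : bs_types A = [set pattern_literals f | f in [set pattern_truth a | a in ~: A]].
  rewrite -imset_comp; apply: eq_in_imset => a; rewrite inE.
  exact: tp_bs_pattern.
apply: leq_trans (leq_imset_card _ _) _; apply: leq_trans (max_card _) _.
by rewrite card_ffun card_bool card_ffun card_prod card_bool !card_ord.
Qed.

End DisjointGoodSet.

Lemma lambda0'_attained : exists2 B, good R B & #|B| = lambda0' R.
Proof.
apply: (big_ind (fun m => exists2 B, good R B & #|B| = m)).
- by exists setT; [exact: goodT | rewrite cardsT].
- move=> x y [B1 gB1 <-] [B2 gB2 <-]; rewrite /minn.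
  by case: ltnP => _; [exists B1 | exists B2].
- by move=> B gB; exists B.
Qed.

Lemma lambda1_attained : exists A, lambda1 R = #|bs_types A|.
Proof. by exists [arg max_(A > setT) #|bs_types A|]; apply: bigmax_eq_arg. Qed.

End BasicTypes.

Theorem fact3p2 (U : finType) (n : nat) (R : n.-tuple U -> bool) :
  lambda1 R <= lambda0' R + 1 /\
  (lambda1 R = lambda0' R + 1 -> lambda1 R <= 2 ^ (2 ^ (n ^ 2))).
Proof.
have [B gB <-] := lambda0'_attained R.
have [A ->] := lambda1_attained R.
split=> [|cardAB].
  by apply: leq_trans (card_bs_types A gB) _; rewrite leq_add2r subset_leq_card ?subsetDl.
exact: card_bs_types_disjoint gB (disjoint_of_card_bs_types gB cardAB).
Qed.
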